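(* Let $\kappa\in\mathbb{C}\setminus\{0\}$, and let $(\tau_m)_{m\in\mathbb{Z}}$, $(\theta_m)_{m\in\mathbb{Z}}$ be nonzero complex numbers. Put $$u_m=\frac{\tau_m}{\tau_{m+1}},\qquad w_m=\frac{\theta_{m+1}}{\theta_m}\qquad(m\in\mathbb{Z}).$$ Define the $\mathbb{Z}\times\mathbb{Z}$ matrices $\mathcal{L}$ and $\overline{\mathcal{L}}$ by $$\mathcal{L}_{m,k}=\delta_{m+1,k}+\sum_{j=0}^\infty b_{-j}(m)\,\delta_{m-j,k},\qquad \overline{\mathcal{L}}_{m,k}=c_{-1}(m)\,\delta_{m-1,k}+\sum_{j=0}^\infty c_j(m)\,\delta_{m+j,k},$$ where for $j\ge 0$ $$b_{-j}(m)=(-1)^{j+1}\prod_{i=1}^{j}u_{m-i}\prod_{i=0}^{j}w_{m-i}\,\bigl(\kappa u_{m-j}+u_{m-j-1}\bigr),$$ $$c_j(m)=\kappa^{-j-1}\prod_{i=0}^{j-1}u_{m+i}^{-1}\prod_{i=0}^{j}w_{m+i}^{-1}\,\bigl(\kappa u_{m+j}^{-1}+u_{m+j+1}^{-1}\bigr),\qquad c_{-1}(m)=\frac{u_{m-1}}{u_m}.$$ Then $$\mathcal{L}=\frac{\Theta}{T}\Bigl[\,W\,\frac{1}{1+\Lambda^{-1}}\,U\,(\Lambda-\kappa)\Bigr]\frac{T}{\Theta},\qquad \overline{\mathcal{L}}=\frac{\Theta}{T}\Bigl[\,\frac{1}{1-\kappa^{-1}\Lambda}\,U^{-1}\,(1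+\Lambda^{-1})\,W^{-1}\Bigr]\frac{T}{\Theta}.$$
   Context: $\Lambda$ is the $\mathbb{Z}\times\mathbb{Z}$ shift matrix, $\Lambda_{m,k}=\delta_{m+1,k}$, and $\Lambda^{-1}$ its inverse ($\Lambda^{-1}_{m,k}=\delta_{m-1,k}$); $1$ denotes the identity matrix. $U^{\pm1}=\mathrm{diag}[u_m^{\pm1}]$, $W^{\pm1}=\mathrm{diag}[w_m^{\pm1}]$ are diagonal matrices, $\frac{\Theta}{T}$ denotes the diagonal matrix $\mathrm{diag}[\theta_m/\tau_m]$ and $\frac{T}{\Theta}$ its inverse $\mathrm{diag}[\tau_m/\theta_m]$. The expressions $\frac{1}{1+\Lambda^{-1}}$ and $\frac{1}{1-\kappa^{-1}\Lambda}$ are understood as the series $\sum_{j\ge0}(-1)^j\Lambda^{-j}$ and $\sum_{j\ge0}\kappa^{-j}\Lambda^{j}$ respectively; all matrix products involved have finitely many nonzero terms in each entry. *)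

From HB Require Import structures.
From mathcomp Require Import all_boot all_order all_algebra.
From mathcomp Require Import all_classical all_reals.
From mathcomp Require Import complex.
Set Implicit Arguments. Unset Strict Implicit. Unset Printing Implicit Defensive.
Import Order.TTheory GRing.Theory Num.Theory.
Local Open Scope ring_scope.

Definition zmx (K : Type) := int -> int -> K.

Section ZMatrices.
Variable K : comUnitRingType.

(* Matrix product: (A B)_{m,k} = sum_{l in Z} A_{m,l} B_{l,k}, as a finitely
   supported sum (all products used below have finitely many nonzero terms
   in each entry). *)
Definition zmx_mul (A B : zmx K) : zmx K :=
  fun m k => \sum_(l \in [set: int]) (A m l * B l k).

Definition zmx_add (A B : zmx K) : zmx K := fun m k => A m k + B m k.
Definition zmx_scale (c : K) (A : zmx K) : zmx K := fun m k => c * A m k.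

Definition zmx1 : zmx K := fun m k => (m == k)%:R.
Definition Lambda : zmx K := fun m k => (k == m + 1)%:R.
Definition Lambda_inv : zmx K := fun m k => (k == m - 1)%:R.
Definition zdiag (d : int -> K) : zmx K := fun m k => if m == k then d m else 0.

Definition inv_one_plus_Lambda_inv : zmx K :=
  fun m k => \sum_(j \in [set: nat]) ((-1 : K) ^+ j * (k == m - j%:Z)%:R).
Definition inv_one_minus_kinv_Lambda (kappa : K) : zmx K :=
  fun m k => \sum_(j \in [set: nat]) (kappa ^- j * (k == m + j%:Z)%:R).
End ZMatrices.

From HB Require Import structures.
From mathcomp Require Import all_boot all_order all_algebra.
From mathcomp Require Import all_classical all_reals.
From mathcomp Require Import complex.
From mathcomp Require Import zify ring.
Set Implicit Arguments. Unset Strict Implicit. Unset Printing Implicit Defensive.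
Import Order.TTheory GRing.Theory Num.Theory.
Local Open Scope ring_scope.

(* Every matrix on the right-hand sides is diagonal, bidiagonal or triangular
   Toeplitz, so each entry of the products is a sum of at most two terms.
   Conjugation by Theta/T multiplies the (m, k) entry by
   theta_m tau_k / (tau_m theta_k), and the products of u's and w's in
   b_{-j}(m) and c_j(m) telescope to exactly such ratios. *)

Section FiniteSupportSums.
Variables (K : pzSemiRingType) (T : choiceType).
Implicit Types F : T -> K.

Lemma fsbigT_supp1 F a :
  (forall l, l != a -> F l = 0) -> \sum_(l \in [set: T]) F l = F a.
Proof.
move=> F0; rewrite -(fsbig_widen [set a]) ?fsbig_set1 // => l [_ /= neq_la].
by apply: F0; apply/eqP.
Qed.

Lemma fsbigT_supp2 F a b : a != b ->
  (forall l, l != a -> l != b -> F l = 0) -> \sum_(l \in [set: T]) F l = F a + F b.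
Proof.
move=> neq_ab F0; rewrite (fsbigE [:: a; b]) //.
- by rewrite !big_cons big_nil !mem_set /= ?addr0.
- by rewrite /= inE neq_ab.
- by move=> l _; rewrite !inE negb_or => /andP[] /F0.
Qed.

Lemma fsbigT_delta (S : eqType) (g : T -> S) F j0 s : injective g -> s = g j0 ->
  \sum_(j \in [set: T]) F j * (s == g j)%:R = F j0.
Proof.
move=> g_inj ->; rewrite (fsbigT_supp1 (a := j0)) ?eqxx ?mulr1 // => j.
by rewrite (inj_eq g_inj) eq_sym => /negbTE ->; rewrite mulr0.
Qed.

Lemma fsbigT_delta0 (S : eqType) (g : T -> S) F s : (forall j, s != g j) ->
  \sum_(j \in [set: T]) F j * (s == g j)%:R = 0.
Proof. by move=> s_out; rewrite fsbig1 // => j _; rewrite (negbTE (s_out j)) mulr0. Qed.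

End FiniteSupportSums.
Arguments fsbigT_delta {K T S g F} j0 {s}.

Lemma int_sub_or_addS (m k : int) :
  (exists j : nat, k = m - j%:Z) \/ (exists n : nat, k = m + n.+1%:Z).
Proof.
case: (lerP k m) => [le_km | lt_mk].
- by left; exists `|m - k|%N; lia.
- by right; exists `|k - m|%N.-1; lia.
Qed.

Lemma int_add_or_subS (m k : int) :
  (exists j : nat, k = m + j%:Z) \/ (exists n : nat, k = m - n.+1%:Z).
Proof.
case: (lerP m k) => [le_mk | lt_km].
- by left; exists `|k - m|%N; lia.
- by right; exists `|m - k|%N.-1; lia.
Qed.

Section BandedProducts.
Variable K : comUnitRingType.
Implicit Types (A : zmx K) (d : int -> K).

Lemma zmx_mul_diagl d A m k : zmx_mul (zdiag d) A m k = d m * A m k.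
Proof.
rewrite /zmx_mul (fsbigT_supp1 (a := m)) /zdiag ?eqxx // => l.
by rewrite eq_sym => /negbTE ->; rewrite mul0r.
Qed.

Lemma zmx_mul_diagr d A m k : zmx_mul A (zdiag d) m k = A m k * d k.
Proof.
rewrite /zmx_mul (fsbigT_supp1 (a := k)) /zdiag ?eqxx // => l.
by move=> /negbTE ->; rewrite mulr0.
Qed.

Lemma zmx_mul_Lambda_add_scale A c m k :
  zmx_mul A (zmx_add (Lambda K) (zmx_scale c (zmx1 K))) m k = A m (k - 1) + c * A m k.
Proof.
rewrite /zmx_mul /zmx_add /zmx_scale /Lambda /zmx1 (fsbigT_supp2 (a := k - 1) (b := k)).
- have -> : (k == k - 1 + 1) by lia.
  have -> : (k - 1 == k) = false by lia.
  have -> : (k == k + 1) = false by lia.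
  by rewrite eqxx /=; ring.
- by lia.
- move=> l l_neq1 l_neqk; have -> : (k == l + 1) = false by lia.
  by rewrite (negbTE l_neqk) mulr0 addr0 mulr0.
Qed.

Lemma zmx_mul_1_add_Lambda_inv A m k :
  zmx_mul A (zmx_add (zmx1 K) (Lambda_inv K)) m k = A m k + A m (k + 1).
Proof.
rewrite /zmx_mul /zmx_add /zmx1 /Lambda_inv (fsbigT_supp2 (a := k) (b := k + 1)).
- have -> : (k == k + 1 - 1) by lia.
  have -> : (k == k - 1) = false by lia.
  have -> : (k + 1 == k) = false by lia.
  by rewrite /= eqxx addr0 add0r !mulr1.
- by lia.
- move=> l l_neqk l_neq1; have -> : (k == l - 1) = false by lia.
  by rewrite (negbTE l_neqk) addr0 mulr0.
Qed.

Lemma inv_one_plus_Lambda_inv_sub m (j : nat) :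
  inv_one_plus_Lambda_inv K m (m - j%:Z) = (-1) ^+ j.
Proof. by rewrite /inv_one_plus_Lambda_inv (fsbigT_delta j) // => i l; lia. Qed.

Lemma inv_one_plus_Lambda_inv_diag m : inv_one_plus_Lambda_inv K m m = 1.
Proof. by have := inv_one_plus_Lambda_inv_sub m 0; rewrite subr0. Qed.

Lemma inv_one_plus_Lambda_inv_gt m k : m < k -> inv_one_plus_Lambda_inv K m k = 0.
Proof. by move=> lt_mk; apply: fsbigT_delta0 => j; lia. Qed.

Lemma inv_one_minus_kinv_Lambda_add (kappa : K) m (j : nat) :
  inv_one_minus_kinv_Lambda kappa m (m + j%:Z) = kappa ^- j.
Proof. by rewrite /inv_one_minus_kinv_Lambda (fsbigT_delta j) // => i l; lia. Qed.

Lemma inv_one_minus_kinv_Lambda_diag (kappa : K) m :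
  inv_one_minus_kinv_Lambda kappa m m = 1.
Proof. by have := inv_one_minus_kinv_Lambda_add kappa m 0; rewrite addr0 expr0 invr1. Qed.

Lemma inv_one_minus_kinv_Lambda_lt (kappa : K) m k :
  k < m -> inv_one_minus_kinv_Lambda kappa m k = 0.
Proof. by move=> lt_km; apply: fsbigT_delta0 => j; lia. Qed.

End BandedProducts.

Section LaxEntries.
Variables (K : fieldType) (kappa : K) (tau theta : int -> K).
Hypothesis tau_neq0 : forall m, tau m != 0.
Hypothesis theta_neq0 : forall m, theta m != 0.

Let u (m : int) := tau m / tau (m + 1).
Let w (m : int) := theta (m + 1) / theta m.

Lemma prod_u_lower m (j : nat) :
  \prod_(1 <= i < j.+1) u (m - i%:Z) = tau (m - j%:Z) / tau m.
Proof.
elim: j => [|j IH]; first by rewrite big_nil subr0 divff.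
rewrite big_nat_recr //= IH /u.
have -> : m - j.+1%:Z + 1 = m - j%:Z by lia.
by field; rewrite !tau_neq0.
Qed.

Lemma prod_w_lower m (j : nat) :
  \prod_(0 <= i < j.+1) w (m - i%:Z) = theta (m + 1) / theta (m - j%:Z).
Proof.
elim: j => [|j IH]; first by rewrite big_nat1 subr0.
rewrite big_nat_recr //= IH /w.
have -> : m - j.+1%:Z + 1 = m - j%:Z by lia.
by field; rewrite !theta_neq0.
Qed.

Lemma prod_uV_upper m (j : nat) :
  \prod_(0 <= i < j) (u (m + i%:Z))^-1 = tau (m + j%:Z) / tau m.
Proof.
elim: j => [|j IH]; first by rewrite big_nil addr0 divff.
rewrite big_nat_recr //= IH /u.
have -> : m + j.+1%:Z = m + j%:Z + 1 by lia.
by field; rewrite !tau_neq0.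
Qed.

Lemma prod_wV_upper m (j : nat) :
  \prod_(0 <= i < j.+1) (w (m + i%:Z))^-1 = theta m / theta (m + j.+1%:Z).
Proof.
elim: j => [|j IH]; first by rewrite big_nat1 addr0 invf_div.
rewrite big_nat_recr //= IH /w.
have -> : m + j.+2%:Z = m + j.+1%:Z + 1 by lia.
by field; rewrite !theta_neq0.
Qed.

Let b (j : nat) (m : int) :=
  (-1 : K) ^+ j.+1 * (\prod_(1 <= i < j.+1) u (m - i%:Z))
    * (\prod_(0 <= i < j.+1) w (m - i%:Z))
    * (kappa * u (m - j%:Z) + u (m - j%:Z - 1)).

Let c (j : nat) (m : int) :=
  kappa ^- j.+1 * (\prod_(0 <= i < j) (u (m + i%:Z))^-1)
    * (\prod_(0 <= i < j.+1) (w (m + i%:Z))^-1)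
    * (kappa * (u (m + j%:Z))^-1 + (u (m + j%:Z + 1))^-1).

Lemma L_entry (m k : int) :
  (k == m + 1)%:R + \sum_(j \in [set: nat]) (b j m * (k == m - j%:Z)%:R) =
  theta m / tau m
    * (w m * inv_one_plus_Lambda_inv K m (k - 1) * u (k - 1)
       + - kappa * (w m * inv_one_plus_Lambda_inv K m k * u k))
    * (tau k / theta k).
Proof.
case: (int_sub_or_addS m k) => [[j ->]|[[|n] ->]].
- have -> : (m - j%:Z == m + 1) = false by lia.
  rewrite add0r (fsbigT_delta j) //; last by move=> i l; lia.
  rewrite /b prod_u_lower prod_w_lower /u /w.
  have -> : m - j%:Z - 1 = m - j.+1%:Z by lia.
  have -> : m - j.+1%:Z + 1 = m - j%:Z by lia.
  by rewrite !inv_one_plus_Lambda_inv_sub exprS; field; rewrite !tau_neq0 !theta_neq0.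
- rewrite fsbigT_delta0 => [|j]; last by lia.
  have -> : m + 1%:Z = m + 1 by [].
  rewrite addrK eqxx inv_one_plus_Lambda_inv_diag inv_one_plus_Lambda_inv_gt ?ltrDl //.
  by rewrite /u /w /=; field; rewrite !tau_neq0 !theta_neq0.
- rewrite fsbigT_delta0 => [|j]; last by lia.
  have -> : (m + n.+2%:Z == m + 1) = false by lia.
  by rewrite !inv_one_plus_Lambda_inv_gt /=; [ring | lia..].
Qed.

Hypothesis kappa_neq0 : kappa != 0.

Let cm1 (m : int) := u (m - 1) / u m.

Lemma Lbar_entry (m k : int) :
  cm1 m * (k == m - 1)%:R + \sum_(j \in [set: nat]) (c j m * (k == m + j%:Z)%:R) =
  theta m / tau m
    * ((inv_one_minus_kinv_Lambda kappa m k * (u k)^-1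
        + inv_one_minus_kinv_Lambda kappa m (k + 1) * (u (k + 1))^-1) * (w k)^-1)
    * (tau k / theta k).
Proof.
case: (int_add_or_subS m k) => [[j ->]|[[|n] ->]].
- have -> : (m + j%:Z == m - 1) = false by lia.
  rewrite mulr0 add0r (fsbigT_delta j) //; last by move=> i l; lia.
  rewrite /c prod_uV_upper prod_wV_upper /u /w.
  have -> : m + j%:Z + 1 = m + j.+1%:Z by lia.
  rewrite !inv_one_minus_kinv_Lambda_add exprS.
  have kappaX_neq0 : kappa ^+ j != 0 by rewrite expf_neq0.
  by field; rewrite !tau_neq0 !theta_neq0 kappaX_neq0 kappa_neq0.
- rewrite fsbigT_delta0 => [|j]; last by lia.
  have -> : m - 1%:Z = m - 1 by [].
  rewrite subrK eqxx inv_one_minus_kinv_Lambda_diag inv_one_minus_kinv_Lambda_lt ?gtrDl //.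
  by rewrite /cm1 /u /w !subrK /=; field; rewrite !tau_neq0 !theta_neq0.
- rewrite fsbigT_delta0 => [|j]; last by lia.
  have -> : (m - n.+2%:Z == m - 1) = false by lia.
  by rewrite !inv_one_minus_kinv_Lambda_lt /=; [ring | lia..].
Qed.

End LaxEntries.

Theorem proposition2p1 (R : realType) (kappa : R[i]) (tau theta : int -> R[i])
  (hkappa : kappa != 0) (htau : forall m, tau m != 0) (htheta : forall m, theta m != 0) :
  let u := fun m : int => tau m / tau (m + 1) in
  let w := fun m : int => theta (m + 1) / theta m in
  let b := fun (j : nat) (m : int) =>
    (-1 : R[i]) ^+ j.+1 * (\prod_(1 <= i < j.+1) u (m - i%:Z))
      * (\prod_(0 <= i < j.+1) w (m - i%:Z))
      * (kappa * u (m - j%:Z) + u (m - j%:Z - 1)) in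
  let c := fun (j : nat) (m : int) =>
    kappa ^- j.+1 * (\prod_(0 <= i < j) (u (m + i%:Z))^-1)
      * (\prod_(0 <= i < j.+1) (w (m + i%:Z))^-1)
      * (kappa * (u (m + j%:Z))^-1 + (u (m + j%:Z + 1))^-1) in
  let cm1 := fun m : int => u (m - 1) / u m in
  let L : zmx R[i] := fun m k =>
    (k == m + 1)%:R + \sum_(j \in [set: nat]) (b j m * (k == m - j%:Z)%:R) in
  let Lbar : zmx R[i] := fun m k =>
    cm1 m * (k == m - 1)%:R + \sum_(j \in [set: nat]) (c j m * (k == m + j%:Z)%:R) in
  let ThT := zdiag (fun m => theta m / tau m) in
  let TTh := zdiag (fun m => tau m / theta m) in
  let U := zdiag u in
  let Uinv := zdiag (fun m => (u m)^-1) in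
  let W := zdiag w in
  let Winv := zdiag (fun m => (w m)^-1) in
  L = zmx_mul (zmx_mul ThT
        (zmx_mul (zmx_mul (zmx_mul W (inv_one_plus_Lambda_inv R[i])) U)
                 (zmx_add (Lambda R[i]) (zmx_scale (- kappa) (zmx1 R[i])))))
        TTh
  /\
  Lbar = zmx_mul (zmx_mul ThT
        (zmx_mul (zmx_mul (zmx_mul (inv_one_minus_kinv_Lambda kappa) Uinv)
                          (zmx_add (zmx1 R[i]) (Lambda_inv R[i])))
                 Winv))
        TTh.
Proof.
move=> u w b c cm1 L Lbar ThT TTh U Uinv W Winv.
split; apply/funext => m; apply/funext => k.
- rewrite zmx_mul_diagr zmx_mul_diagl zmx_mul_Lambda_add_scale.
  rewrite !zmx_mul_diagr !zmx_mul_diagl.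
  exact: (L_entry kappa htau htheta).
- rewrite zmx_mul_diagr zmx_mul_diagl zmx_mul_diagr zmx_mul_1_add_Lambda_inv.
  rewrite !zmx_mul_diagr.
  exact: (Lbar_entry htau htheta hkappa).
Qed.
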